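(* Let $(X,\mathrm{dist})$ be a complete metric space, $\Sigma$ a metric space, and $\{U_\sigma(t,\tau)\}_{\sigma\in\Sigma}$ a family of processes on $X$. Then the family is uniformly asymptotically compact if and only if it is totally uniformly dissipative.
   Context: A process on $X$ is a family of maps $U(t,\tau):X\to X$, indexed by reals $t\ge\tau$, with $U(\tau,\tau)=\mathrm{id}_X$ and $U(t,\tau)=U(t,s)U(s,\tau)$ for $t\ge s\ge\tau$; no continuity is assumed. For nonempty $B,C\subset X$, $\delta_X(B,C)=\sup_{x\in B}\inf_{\xi\in C}\mathrm{dist}(x,\xi)$. A set $K\subset X$ is uniformly attracting if for every bounded $C\subset X$, $\lim_{t-\tau\to\infty}\sup_{\sigma\in\Sigma}\delta_X(U_\sigma(t,\tau)C,K)=0$. The family is uniformly asymptotically compact if there exists a compact uniformly attracting set. A set $B\subset X$ is uniformly absorbing if for every bounded $C\subset X$ there is $t_e=t_e(C)$ with $U_\sigma(t,\tau)C\subset B$ for all $\sigma\in\Sigma$ whenever $t-\tau\ge t_e$. For $\varepsilon>0$, the $\varepsilon$-neighborhood of $K$ is $\mathcal{U}_\varepsilon(K)=\bigcup_{x\in K}\{\xi\in X:\mathrm{dist}(x,\xi)<\varepsilon\}$; $K$ is uniformly $\varepsilon$-absorbing if $\mathcal{U}_\varepsilon(K)$ is uniformly absorbing. The family is uniformly $\varepsilon$-dissipative if there is a finite uniformly $\varepsilon$-absorbing set, and totally uniformly dissipative if it is uniformly $\varepsilon$-dissipative for every $\varepsilon>0$. *)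

From Stdlib Require Import Reals Lra List.
Open Scope R_scope.

Record MetricSpace : Type := MkMetricSpace {
  carrier :> Type;
  dist : carrier -> carrier -> R;
  dist_nonneg : forall x y, 0 <= dist x y;
  dist_eq0 : forall x y, dist x y = 0 <-> x = y;
  dist_sym : forall x y, dist x y = dist y x;
  dist_tri : forall x y z, dist x z <= dist x y + dist y z
}.

Arguments dist {m} _ _.

Definition cauchy_seq {X : MetricSpace} (u : nat -> X) : Prop :=
  forall eps, 0 < eps -> exists N, forall m n, (N <= m)%nat -> (N <= n)%nat ->
    dist (u m) (u n) < eps.

Definition seq_converges_to {X : MetricSpace} (u : nat -> X) (l : X) : Prop :=
  forall eps, 0 < eps -> exists N, forall n, (N <= n)%nat -> dist (u n) l < eps.

Definition complete_metric (X : MetricSpace) : Prop :=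
  forall u : nat -> X, cauchy_seq u -> exists l, seq_converges_to u l.

Definition bounded {X : MetricSpace} (C : X -> Prop) : Prop :=
  exists x0 r, forall x, C x -> dist x0 x <= r.

Definition is_open {X : MetricSpace} (O : X -> Prop) : Prop :=
  forall x, O x -> exists eps, 0 < eps /\ forall y, dist x y < eps -> O y.

Definition compact {X : MetricSpace} (K : X -> Prop) : Prop :=
  forall (I : Type) (O : I -> X -> Prop),
    (forall i, is_open (O i)) ->
    (forall x, K x -> exists i, O i x) ->
    exists l : list I, forall x, K x -> exists i, In i l /\ O i x.

Definition finite_set {X : Type} (K : X -> Prop) : Prop :=
  exists l : list X, forall x, K x <-> In x l.

Definition process_family {X : MetricSpace} {S : Type}
    (U : S -> R -> R -> X -> X) : Prop :=
  (forall sigma tau x, U sigma tau tau x = x) /\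
  (forall sigma t s tau x, tau <= s -> s <= t ->
      U sigma t tau x = U sigma t s (U sigma s tau x)).

(* lim_{t-tau -> oo} sup_sigma delta_X(U_sigma(t,tau) C, K) = 0, unfolded. *)
Definition uniformly_attracting {X : MetricSpace} {S : Type}
    (U : S -> R -> R -> X -> X) (K : X -> Prop) : Prop :=
  forall C : X -> Prop, bounded C ->
  forall eps, 0 < eps -> exists T, forall t tau, tau <= t -> T <= t - tau ->
    forall sigma x, C x -> exists xi, K xi /\ dist (U sigma t tau x) xi < eps.

Definition uniformly_asymptotically_compact {X : MetricSpace} {S : Type}
    (U : S -> R -> R -> X -> X) : Prop :=
  exists K : X -> Prop, compact K /\ uniformly_attracting U K.

Definition uniformly_absorbing {X : MetricSpace} {S : Type}
    (U : S -> R -> R -> X -> X) (B : X -> Prop) : Prop :=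
  forall C : X -> Prop, bounded C -> exists te, forall sigma t tau,
    tau <= t -> te <= t - tau -> forall x, C x -> B (U sigma t tau x).

Definition eps_nbhd {X : MetricSpace} (eps : R) (K : X -> Prop) : X -> Prop :=
  fun xi => exists x, K x /\ dist x xi < eps.

Definition uniformly_eps_absorbing {X : MetricSpace} {S : Type}
    (U : S -> R -> R -> X -> X) (eps : R) (K : X -> Prop) : Prop :=
  uniformly_absorbing U (eps_nbhd eps K).

Definition uniformly_eps_dissipative {X : MetricSpace} {S : Type}
    (U : S -> R -> R -> X -> X) (eps : R) : Prop :=
  exists K : X -> Prop, finite_set K /\ uniformly_eps_absorbing U eps K.

Definition totally_uniformly_dissipative {X : MetricSpace} {S : Type}
    (U : S -> R -> R -> X -> X) : Prop :=
  forall eps, 0 < eps -> uniformly_eps_dissipative U eps.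

(** A compact uniformly attracting set is covered by finitely many [eps/2]-balls, whose
    centres are then uniformly [eps]-absorbing.  Conversely, choose finite sets [l n]
    that are uniformly [1/(n+1)]-absorbing and let [K] be the set of points lying within
    [1/(n+1)] of [l n] for every [n].  Both the compactness of [K] (in a complete space)
    and its uniform attraction follow from one fact: a grill that contains the whole
    space and is stable under intersection with each of the finite unions of closed
    balls defining [K] has a cluster point in [K].  For compactness the grill consists
    of the sets whose trace on [K] has no finite subcover; for attraction, of the sets
    visited infinitely often by a sequence of late orbit points staying [eps] away
    from [K]. *)

From Stdlib Require Import Reals Lra Lia List Classical ClassicalEpsilon.

Definition net_radius (n : nat) : R := / INR (S n).

Lemma net_radius_pos n : 0 < net_radius n.
Proof. unfold net_radius; apply Rinv_0_lt_compat, lt_0_INR; lia. Qed.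

Lemma net_radius_small eps : 0 < eps -> exists N, 2 * net_radius N < eps.
Proof.
  intro Heps. destruct (archimed_cor1 (eps / 2)) as [N [HN HN0]]; [lra|].
  exists N. unfold net_radius.
  assert (/ INR (S N) <= / INR N).
  { apply Rinv_le_contravar; [apply lt_0_INR; lia | apply le_INR; lia]. }
  lra.
Qed.

Lemma dist_self (X : MetricSpace) (x : X) : dist x x = 0.
Proof. apply dist_eq0; reflexivity. Qed.

Lemma dist_le_limit (X : MetricSpace) (u : nat -> X) (y c : X) (r : R) (N : nat) :
  seq_converges_to u y -> (forall n, (N <= n)%nat -> dist c (u n) <= r) ->
  dist c y <= r.
Proof.
  intros Hu Hc. apply Rnot_lt_le; intro Hlt.
  destruct (Hu (dist c y - r)) as [M HM]; [lra|].
  specialize (HM (max N M) ltac:(lia)).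
  specialize (Hc (max N M) ltac:(lia)).
  pose proof (dist_tri X c (u (max N M)) y). lra.
Qed.

Record grill {X : Type} (G : (X -> Prop) -> Prop) : Prop := {
  grill_mono : forall A B, G A -> (forall y, A y -> B y) -> G B;
  grill_union : forall A B C, G A -> (forall y, A y -> B y \/ C y) -> G B \/ G C;
  grill_empty : ~ G (fun _ => False)
}.

Section GrillFacts.
Variables (X : Type) (G : (X -> Prop) -> Prop).
Hypothesis HG : grill G.

Lemma grill_inhabited A : G A -> exists y, A y.
Proof.
  intro HA. apply NNPP; intro Hno. apply (grill_empty G HG).
  apply (grill_mono G HG A); auto. intros y Ay; apply Hno; eauto.
Qed.

Lemma grill_finite_union (T : Type) (L : list T) (Q : T -> X -> Prop) A :
  G A -> (forall y, A y -> exists f, In f L /\ Q f y) ->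
  exists f, In f L /\ G (fun y => A y /\ Q f y).
Proof.
  revert A; induction L as [|a L IH]; intros A HA HQ.
  - exfalso. apply (grill_empty G HG), (grill_mono G HG A); auto.
    intros y Ay. destruct (HQ y Ay) as [f [[] _]].
  - destruct (grill_union G HG A (fun y => A y /\ Q a y)
                (fun y => A y /\ exists f, In f L /\ Q f y) HA) as [Ha | HL].
    + intros y Ay. destruct (HQ y Ay) as [f [[<- | Hf] Hq]]; [left | right]; eauto.
    + exists a; split; [left|]; auto.
    + destruct (IH _ HL) as [f [Hf Hb]]; [intros y [_ Hy]; exact Hy|].
      exists f; split; [right; exact Hf|].
      apply (grill_mono G HG _ _ Hb). intros y [[Ay _] Hq]; auto.
Qed.

End GrillFacts.

Lemma frequently_grill (X : Type) (w : nat -> X) :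
  grill (fun A => forall M, exists k, (M <= k)%nat /\ A (w k)).
Proof.
  split.
  - intros A B HA HAB M. destruct (HA M) as [k [Hk Ak]]; eauto.
  - intros A B C HA Hs. apply NNPP; intro Hn. apply not_or_and in Hn as [HB HC].
    apply not_all_ex_not in HB as [M1 HM1]. apply not_all_ex_not in HC as [M2 HM2].
    destruct (HA (max M1 M2)) as [k [Hk Ak]].
    destruct (Hs _ Ak); [apply HM1 | apply HM2]; exists k; split; auto; lia.
  - intro H0. destruct (H0 0%nat) as [k [_ []]].
Qed.

Lemma uncovered_grill (X I : Type) (K : X -> Prop) (O : I -> X -> Prop) :
  grill (fun A => ~ exists L : list I, forall x, K x -> A x -> exists i, In i L /\ O i x).
Proof.
  split.
  - intros A B HA HAB [L HL]. apply HA. exists L. auto.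
  - intros A B C HA Hs. apply NNPP; intro Hn. apply not_or_and in Hn as [HB HC].
    apply NNPP in HB as [L1 H1]. apply NNPP in HC as [L2 H2].
    apply HA. exists (L1 ++ L2). intros x Kx Ax.
    destruct (Hs x Ax) as [Bx | Cx];
      [destruct (H1 x Kx Bx) as [i [Hi Oi]] | destruct (H2 x Kx Cx) as [i [Hi Oi]]];
      exists i; split; auto; apply in_or_app; auto.
  - intro H0. apply H0. exists nil. intros x _ [].
Qed.

Definition net_nbhd {X : MetricSpace} (l : nat -> list X) (n : nat) (y : X) : Prop :=
  exists f, In f (l n) /\ dist f y <= net_radius n.

Definition net_limit_set {X : MetricSpace} (l : nat -> list X) (y : X) : Prop :=
  forall n, net_nbhd l n y.

Fixpoint refine_chain {X : MetricSpace} (c : nat -> (X -> Prop) -> X) (n : nat) : X -> Prop :=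
  match n with
  | O => fun _ => True
  | S m => fun y => refine_chain c m y /\ dist (c m (refine_chain c m)) y <= net_radius m
  end.

Section GrillClusterPoint.
Variables (X : MetricSpace) (l : nat -> list X) (G : (X -> Prop) -> Prop).
Hypotheses (HX : complete_metric X) (HG : grill G) (Hfull : G (fun _ => True))
  (Hshrink : forall A n, G A -> G (fun y => A y /\ net_nbhd l n y)).

Lemma grill_refine n A :
  G A -> exists f, In f (l n) /\ G (fun y => A y /\ dist f y <= net_radius n).
Proof.
  intro HA.
  destruct (grill_finite_union X G HG X (l n) (fun f y => dist f y <= net_radius n)
              (fun y => A y /\ net_nbhd l n y)) as [f [Hf Hb]].
  - apply Hshrink, HA.
  - intros y [_ Hy]; exact Hy.
  - exists f; split; auto. apply (grill_mono G HG _ _ Hb). intros y [[Ay _] Hd]; auto.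
Qed.

Section Chain.
Variable c : nat -> (X -> Prop) -> X.
Hypothesis Hc : forall n A, G A ->
  In (c n A) (l n) /\ G (fun y => A y /\ dist (c n A) y <= net_radius n).

Let center n := c n (refine_chain c n).

Lemma refine_chain_grill n : G (refine_chain c n).
Proof. induction n; simpl; [exact Hfull | apply Hc, IHn]. Qed.

Lemma refine_chain_antitone n m y : (n <= m)%nat -> refine_chain c m y -> refine_chain c n y.
Proof. induction 1; [auto | intros [Hy _]; auto]. Qed.

Lemma refine_chain_near_center n m y :
  (n < m)%nat -> refine_chain c m y -> dist (center n) y <= net_radius n.
Proof. intros Hnm Hy. exact (proj2 (refine_chain_antitone (S n) m y Hnm Hy)). Qed.

Lemma refine_chain_cluster :
  exists y, net_limit_set l y /\
            forall r, 0 < r -> G (fun w => dist y w < r).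
Proof.
  destruct (choice (fun n z => refine_chain c (S n) z)) as [z Hz].
  { intro n. apply (grill_inhabited X G HG), refine_chain_grill. }
  assert (Hzc : forall n m, (n <= m)%nat -> dist (center n) (z m) <= net_radius n).
  { intros n m Hnm. apply (refine_chain_near_center n (S m) (z m) ltac:(lia) (Hz m)). }
  assert (Hcauchy : cauchy_seq z).
  { intros eps Heps. destruct (net_radius_small eps Heps) as [N HN].
    exists N. intros m p Hm Hp.
    pose proof (Hzc N m Hm); pose proof (Hzc N p Hp).
    pose proof (dist_tri X (z m) (center N) (z p)).
    rewrite (dist_sym X (z m) (center N)) in *. lra. }
  destruct (HX z Hcauchy) as [y Hy].
  assert (Hcy : forall n, dist (center n) y <= net_radius n).
  { intro n. exact (dist_le_limit X z y _ _ n Hy (Hzc n)). }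
  exists y; split.
  - intro n. exists (center n); split; [apply Hc, refine_chain_grill | apply Hcy].
  - intros r Hr. destruct (net_radius_small r Hr) as [N HN].
    apply (grill_mono G HG (refine_chain c (S N))); [apply refine_chain_grill|].
    intros w [_ Hw]. fold (center N) in Hw. pose proof (Hcy N).
    pose proof (dist_tri X y (center N) w). rewrite (dist_sym X y (center N)) in *. lra.
Qed.

End Chain.

Lemma grill_cluster_point :
  exists y, net_limit_set l y /\ forall r, 0 < r -> G (fun w => dist y w < r).
Proof.
  destruct (grill_inhabited X G HG _ Hfull) as [y0 _].
  destruct (choice (fun (p : nat * (X -> Prop)) f => G (snd p) ->
              In f (l (fst p)) /\ G (fun y => snd p y /\ dist f y <= net_radius (fst p))))
    as [c Hc].
  { intros [n A]. destruct (classic (G A)) as [HA | HA].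
    - destruct (grill_refine n A HA) as [f Hf]. exists f; auto.
    - exists y0; tauto. }
  exact (refine_chain_cluster (fun n A => c (n, A)) (fun n A HA => Hc (n, A) HA)).
Qed.

End GrillClusterPoint.

Lemma net_limit_set_compact (X : MetricSpace) (l : nat -> list X) :
  complete_metric X -> compact (net_limit_set l).
Proof.
  intros HX I O Hopen Hcov. apply NNPP; intro Hno.
  destruct (grill_cluster_point X l _ HX (uncovered_grill X I (net_limit_set l) O))
    as [y [Ky Hball]].
  - intros [L HL]. apply Hno. exists L. intros x Kx. apply HL; auto.
  - intros A n HA [L HL]. apply HA. exists L. intros x Kx Ax. apply HL; auto.
  - destruct (Hcov y Ky) as [i Oi]. destruct (Hopen i y Oi) as [r [Hr Hro]].
    apply (Hball r Hr). exists (i :: nil). intros x _ Hx.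
    exists i; split; [left; reflexivity | apply Hro, Hx].
Qed.

Lemma net_limit_set_attracting (X : MetricSpace) (S : Type)
    (U : S -> R -> R -> X -> X) (l : nat -> list X) :
  complete_metric X ->
  (forall n, uniformly_absorbing U (eps_nbhd (net_radius n) (fun x => In x (l n)))) ->
  uniformly_attracting U (net_limit_set l).
Proof.
  intros HX Habs C HC eps Heps. apply NNPP; intro Hno.
  destruct (choice (fun (k : nat) w =>
      (exists sigma t tau x, tau <= t /\ INR k <= t - tau /\ C x /\ w = U sigma t tau x) /\
      forall xi, net_limit_set l xi -> eps <= dist w xi)) as [w Hw].
  { intro k. apply NNPP; intro Hk. apply Hno. exists (INR k).
    intros t tau Htau Hk' sigma x Cx. apply NNPP; intro Hx. apply Hk.
    exists (U sigma t tau x). split; [exists sigma, t, tau, x; auto|].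
    intros xi Kxi. apply Rnot_lt_le; intro Hd. apply Hx. eauto. }
  destruct (grill_cluster_point X l _ HX (frequently_grill X w)) as [y [Ky Hball]].
  - intro M; exists M; auto.
  - intros A n HA M. destruct (Habs n C HC) as [te Hte].
    destruct (INR_unbounded te) as [N HN].
    destruct (HA (max M N)) as [k [Hk Ak]].
    exists k; split; [lia | split; [exact Ak|]].
    destruct (Hw k) as [[sigma [t [tau [x [Htau [Hlate [Cx ->]]]]]]] _].
    assert (INR N <= INR k) by (apply le_INR; lia).
    destruct (Hte sigma t tau Htau ltac:(lra) x Cx) as [f [Hf Hd]].
    exists f; split; [exact Hf | lra].
  - destruct (Hball eps Heps 0%nat) as [k [_ Hk]].
    pose proof (proj2 (Hw k) y Ky). rewrite dist_sym in Hk. lra.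
Qed.

Lemma compact_finite_net (X : MetricSpace) (K : X -> Prop) (eps : R) :
  compact K -> 0 < eps -> exists L : list X, forall x, K x -> exists c, In c L /\ dist c x < eps.
Proof.
  intros HK Heps.
  destruct (HK X (fun c y => K c /\ dist c y < eps)) as [L HL].
  - intros c y [Kc Hd]. exists (eps - dist c y); split; [lra|].
    intros z Hz. split; auto. pose proof (dist_tri X c y z); lra.
  - intros x Kx. exists x. split; auto. rewrite dist_self; exact Heps.
  - exists L. intros x Kx. destruct (HL x Kx) as [c [Hc [_ Hd]]]. eauto.
Qed.

Lemma compact_attracting_eps_dissipative (X : MetricSpace) (S : Type)
    (U : S -> R -> R -> X -> X) (K : X -> Prop) (eps : R) :
  compact K -> uniformly_attracting U K -> 0 < eps -> uniformly_eps_dissipative U eps.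
Proof.
  intros HK Hatt Heps.
  destruct (compact_finite_net X K (eps / 2) HK ltac:(lra)) as [L HL].
  exists (fun x => In x L); split; [exists L; tauto|].
  intros C HC. destruct (Hatt C HC (eps / 2) ltac:(lra)) as [T HT].
  exists T. intros sigma t tau Htau HT' x Cx.
  destruct (HT t tau Htau HT' sigma x Cx) as [xi [Kxi Hd]].
  destruct (HL xi Kxi) as [c [Hc Hd']].
  exists c; split; auto.
  pose proof (dist_tri X c xi (U sigma t tau x)). rewrite (dist_sym X _ xi) in Hd. lra.
Qed.

Lemma totally_dissipative_nets (X : MetricSpace) (S : Type) (U : S -> R -> R -> X -> X) :
  totally_uniformly_dissipative U ->
  exists l : nat -> list X,
    forall n, uniformly_absorbing U (eps_nbhd (net_radius n) (fun x => In x (l n))).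
Proof.
  intro Hdiss. apply (choice (fun n (L : list X) =>
    uniformly_absorbing U (eps_nbhd (net_radius n) (fun x => In x L)))).
  intro n. destruct (Hdiss _ (net_radius_pos n)) as [K [[L HL] HK]].
  exists L. intros C HC. destruct (HK C HC) as [te Hte]. exists te.
  intros sigma t tau Htau Hte' x Cx.
  destruct (Hte sigma t tau Htau Hte' x Cx) as [f [Kf Hd]].
  exists f; split; [apply HL, Kf | exact Hd].
Qed.

Theorem theorem3p8 (X : MetricSpace) (HX : complete_metric X)
  (Sigma : MetricSpace) (U : Sigma -> R -> R -> X -> X)
  (HU : process_family U) :
  uniformly_asymptotically_compact U <-> totally_uniformly_dissipative U.
Proof.
  split.
  - intros [K [HK Hatt]] eps Heps.
    exact (compact_attracting_eps_dissipative X Sigma U K eps HK Hatt Heps).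
  - intro Hdiss. destruct (totally_dissipative_nets X Sigma U Hdiss) as [l Hl].
    exists (net_limit_set l). split.
    + exact (net_limit_set_compact X l HX).
    + exact (net_limit_set_attracting X Sigma U l HX Hl).
Qed.
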